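(* Let $\mathcal{T}$ be a tile set with consistent target frequencies $\{\alpha_T\}_{T\in\mathcal{T}}$, and let $p^*=p^*_{\mathcal{T}}$ be the maximum entropy distribution. For an entry $(i,j)$ write $\mathcal{T}(i,j)=\{T\in\mathcal{T}:(i,j)\in\mathrm{area}(T)\}$. Then $p^*(D)=\prod_{i,j}p^*\big((i,j)=D(i,j)\big)$ for all $D\in\mathcal{D}$, and there exist real numbers $\lambda_T$ ($T\in\mathcal{T}$) such that for every entry $(i,j)$ either $p^*((i,j)=1)\in\{0,1\}$ or \[ p^*((i,j)=1)=\frac{\exp\big(\sum_{T\in\mathcal{T}(i,j)}\lambda_T\big)}{\exp\big(\sum_{T\in\mathcal{T}(i,j)}\lambda_T\big)+1}. \]
   Context: Fix $n,m\ge1$; $\mathcal{D}$ is the set of all $n\times m$ binary matrices. A tile is $T=(t(T),a(T))$ with nonempty $t(T)\subseteq\{1..n\}$, $a(T)\subseteq\{1..m\}$, $\mathrm{area}(T)=t(T)\times a(T)$; $\mathrm{fr}(T;D)=\frac1{|\mathrm{area}(T)|}\sum_{(i,j)\in\mathrm{area}(T)}D(i,j)$, $\mathrm{fr}(T;p)=\sum_D p(D)\mathrm{fr}(T;D)$, $p((i,j)=v)=\sum_{D:D(i,j)=v}p(D)$. Given a finite tile set $\mathcal{T}$ with target frequencies $\alpha_T\in[0,1]$, let $\mathcal{P}=\{p:\mathrm{fr}(T;p)=\alpha_T\ \forall T\in\mathcal{T}\}$; the frequencies are consistent if $\mathcal{P}\neq\emptyset$. The maximum entropy distribution $p^*_{\mathcal{T}}$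 is the (unique) element of $\mathcal{P}$ maximising $H(p)=-\sum_D p(D)\log p(D)$ (natural logarithm, $0\log0=0$). *)

From Stdlib Require Import Reals.
From mathcomp Require Import all_boot.

Set Implicit Arguments.
Unset Strict Implicit.
Unset Printing Implicit Defensive.

Local Open Scope R_scope.

Section Defs.
Variables n m : nat.

Definition entry := ('I_n * 'I_m)%type.

Definition bmat := {ffun entry -> bool}.

(* A tile T = (t(T), a(T)); nonemptiness is imposed as a hypothesis on the tile set. *)
Definition tile := ({set 'I_n} * {set 'I_m})%type.

Definition area (T : tile) : {set entry} := setX T.1 T.2.

Definition distr := bmat -> R.

Definition is_distr (p : distr) : Prop :=
  (forall D, 0 <= p D) /\ \big[Rplus/0]_(D : bmat) p D = 1.

Definition fr_mat (T : tile) (D : bmat) : R :=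
  / INR #|area T| * \big[Rplus/0]_(e in area T) (if D e then 1 else 0).

Definition fr (T : tile) (p : distr) : R :=
  \big[Rplus/0]_(D : bmat) (p D * fr_mat T D).

Definition marg (p : distr) (e : entry) (v : bool) : R :=
  \big[Rplus/0]_(D : bmat | D e == v) p D.

Definition xlnx (x : R) : R := if Rle_dec x 0 then 0 else x * ln x.

Definition entropy (p : distr) : R := - \big[Rplus/0]_(D : bmat) xlnx (p D).

Definition inP (TT : {set tile}) (alpha : tile -> R) (p : distr) : Prop :=
  is_distr p /\ forall T, T \in TT -> fr T p = alpha T.

Definition is_maxent (TT : {set tile}) (alpha : tile -> R) (p : distr) : Prop :=
  inP TT alpha p /\ forall q, inP TT alpha q -> entropy q <= entropy p.

End Defs.

(* Replacing p by the product of its marginals keeps every tile frequency, since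
   frequencies only see marginals, and does not decrease the entropy: by Gibbs'
   inequality the entropy of p is at most the cross entropy against the product,
   which is the entropy of the product, with equality only if p is the product.
   For the second part, perturb the marginals x_e lying in (0,1) along any
   direction d summing to zero on every tile area.  The perturbed products stay
   feasible, so t |-> sum_e h(x_e + t d_e), h the binary entropy, is maximal at
   t = 0 and the vector (ln (1 - x_e) - ln x_e)_e is orthogonal to every such d.
   By duality it is then a linear combination of the tile indicators, which is
   the logistic form with lambda_T the negated coefficients. *)

From Stdlib Require Import Reals Lra.
From mathcomp Require Import all_boot ssralg matrix mxalgebra Rstruct.
From Coquelicot Require Import Coquelicot.

Set Implicit Arguments.
Unset Strict Implicit.
Unset Printing Implicit Defensive.

Import GRing.Theory.
Local Open Scope R_scope.

Lemma sumR_ge0 (I : Type) (r : seq I) (P : pred I) (F : I -> R) :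
  (forall i, P i -> 0 <= F i) -> 0 <= \big[Rplus/0]_(i <- r | P i) F i.
Proof. by move=> F_ge0; apply: big_ind => // *; lra. Qed.

Lemma prodR_gt0 (I : Type) (r : seq I) (P : pred I) (F : I -> R) :
  (forall i, P i -> 0 < F i) -> 0 < \big[Rmult/1]_(i <- r | P i) F i.
Proof. by move=> F_gt0; apply: big_ind => // *; nra. Qed.

Lemma prodR_ge0 (I : Type) (r : seq I) (P : pred I) (F : I -> R) :
  (forall i, P i -> 0 <= F i) -> 0 <= \big[Rmult/1]_(i <- r | P i) F i.
Proof. by move=> F_ge0; apply: big_ind => // *; nra. Qed.

Lemma sumRB (I : Type) (r : seq I) (P : pred I) (F G : I -> R) :
  \big[Rplus/0]_(i <- r | P i) (F i - G i) =
  \big[Rplus/0]_(i <- r | P i) F i - \big[Rplus/0]_(i <- r | P i) G i.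
Proof. exact: sumrB. Qed.

Lemma sumRN (I : Type) (r : seq I) (P : pred I) (F : I -> R) :
  \big[Rplus/0]_(i <- r | P i) (- F i) = - \big[Rplus/0]_(i <- r | P i) F i.
Proof. exact: sumrN. Qed.

Lemma sumR_eq0 (I : finType) (F : I -> R) :
  (forall i, 0 <= F i) -> \big[Rplus/0]_i F i = 0 -> forall i, F i = 0.
Proof.
move=> F_ge0 sum0 i; move: sum0; rewrite (bigD1 i) //=.
have : 0 <= \big[Rplus/0]_(j | j != i) F j by apply: sumR_ge0.
have := F_ge0 i; lra.
Qed.

Lemma ln_prod (I : Type) (r : seq I) (F : I -> R) :
  (forall i, 0 < F i) ->
  ln (\big[Rmult/1]_(i <- r) F i) = \big[Rplus/0]_(i <- r) ln (F i).
Proof.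
move=> F_gt0; elim: r => [|i r IH]; first by rewrite !big_nil ln_1.
by rewrite !big_cons ln_mult ?IH //; apply: prodR_gt0.
Qed.

Lemma xlnxE a : 0 <= a -> xlnx a = a * ln a.
Proof.
rewrite /xlnx; case: Rle_dec => //= a_le0 a_ge0.
have -> : a = 0 by lra.
by rewrite Rmult_0_l.
Qed.

(* For [a, b > 0] the expression equals [a (e^u - 1 - u)] with [u = ln b - ln a]. *)
Lemma gibbs_term a b : 0 <= a -> 0 <= b -> (0 < a -> 0 < b) ->
  0 <= xlnx a - a * ln b - (a - b) /\ (xlnx a - a * ln b - (a - b) = 0 -> a = b).
Proof.
move=> a_ge0 b_ge0 ab_pos; rewrite xlnxE //.
have [->|a_gt0] : a = 0 \/ 0 < a by lra.
  by rewrite !Rmult_0_l; split => *; lra.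
have b_gt0 := ab_pos a_gt0.
set u := ln b - ln a.
have def_b : b = a * exp u by rewrite exp_plus exp_Ropp !exp_ln //; field; lra.
have -> : a * ln a - a * ln b - (a - b) = a * (exp u - 1 - u).
  by rewrite {2}def_b /u; ring.
have exp_u := exp_ineq1_le u; split; first nra.
move=> /Rmult_integral [|u0]; first lra.
have [u_eq0|u_neq0] := Req_dec u 0; last by have := exp_ineq1 u u_neq0; lra.
by rewrite def_b u_eq0 exp_0 Rmult_1_r.
Qed.

Lemma gibbs_inequality (I : finType) (q r : I -> R) :
  (forall i, 0 <= q i) -> (forall i, 0 <= r i) -> (forall i, 0 < q i -> 0 < r i) ->
  \big[Rplus/0]_i q i = 1 -> \big[Rplus/0]_i r i = 1 ->
  \big[Rplus/0]_i (q i * ln (r i)) <= \big[Rplus/0]_i xlnx (q i) /\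
  (\big[Rplus/0]_i (q i * ln (r i)) = \big[Rplus/0]_i xlnx (q i) -> forall i, q i = r i).
Proof.
move=> q_ge0 r_ge0 qr_pos q1 r1.
pose t i := xlnx (q i) - q i * ln (r i) - (q i - r i).
have t_gibbs i := gibbs_term (q_ge0 i) (r_ge0 i) (@qr_pos i).
have sum_t : \big[Rplus/0]_i t i =
    \big[Rplus/0]_i xlnx (q i) - \big[Rplus/0]_i (q i * ln (r i)).
  by rewrite !sumRB q1 r1; ring.
have : 0 <= \big[Rplus/0]_i t i by apply: sumR_ge0 => i _; case: (t_gibbs i).
split; first lra.
move=> eq_sum i; apply: (proj2 (t_gibbs i)).
by apply: sumR_eq0 (fun j => proj1 (t_gibbs j)) _ _; rewrite sum_t eq_sum; ring.
Qed.

Lemma lincomb_of_kernel_orthogonal (I J : finType) (a : I -> J -> R) (g : J -> R) :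
  (forall d : J -> R, (forall i, \big[Rplus/0]_j (a i j * d j) = 0) ->
     \big[Rplus/0]_j (g j * d j) = 0) ->
  exists c : I -> R, forall j, g j = \big[Rplus/0]_i (c i * a i j).
Proof.
move=> ker_orth.
have sum_enum (K : finType) (F : K -> R) :
    \big[Rplus/0]_(k : K) F k = \big[Rplus/0]_(k' < #|K|) F (enum_val k').
  exact: (reindex _ (onW_bij _ (@enum_val_bij K))).
pose A := (\matrix_(i < #|I|, j < #|J|) a (enum_val i) (enum_val j))%R.
pose G := (\row_(j < #|J|) g (enum_val j))%R.
(* The columns of [cokermx A] lie in the kernel of [A], hence are orthogonal to [G]. *)
have /submxP [C defG] : (G <= A)%MS.
  rewrite submxE; apply/eqP/matrixP => i k; rewrite !mxE.
  transitivity (\big[Rplus/0]_j (g j * cokermx A (enum_rank j) k)).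
    by rewrite sum_enum; apply: eq_bigr => j _; rewrite !mxE enum_valK.
  apply: ker_orth => i0.
  move/matrixP: (mulmx_coker A) => /(_ (enum_rank i0) k).
  rewrite !mxE => h; apply: etrans _ h; rewrite sum_enum; apply: eq_bigr => j _.
  by rewrite !mxE enum_rankK enum_valK.
exists (fun i => C ord0 (enum_rank i)) => j.
move/matrixP: defG => /(_ ord0 (enum_rank j)); rewrite !mxE enum_rankK => ->.
by rewrite sum_enum; apply: eq_bigr => i _; rewrite !mxE enum_valK enum_rankK.
Qed.

Lemma logit_inv x s :
  0 < x < 1 -> ln (1 - x) - ln x = s -> x = exp (- s) / (exp (- s) + 1).
Proof.
move=> x01 <-; rewrite Ropp_minus_distr /Rminus exp_plus exp_Ropp !exp_ln; try lra.
by field; split; lra.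
Qed.

Lemma locally_unit_interval x : 0 < x < 1 -> locally x (fun y => 0 < y < 1).
Proof. exact: open_and (open_gt 0) (open_lt 1) x. Qed.

Lemma locally_forall_finType (I : finType) (x : R) (P : I -> R -> Prop) :
  (forall i, locally x (P i)) -> locally x (fun t => forall i, P i t).
Proof.
move=> P_near; suff : locally x (fun t => forall i, i \in enum I -> P i t).
  by apply: filter_imp => t Pt i; apply: Pt; rewrite mem_enum.
elim: (enum I) => [|i s IH]; first exact: filter_forall.
apply: filter_imp (filter_and _ _ (P_near i) IH) => t [Pit Pst] j.
by rewrite in_cons => /orP [/eqP -> //|]; apply: Pst.
Qed.

Lemma locally_line_in_unit (I : finType) (x d : I -> R) :
  (forall i, 0 <= x i <= 1) -> (forall i, d i = 0 \/ 0 < x i < 1) ->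
  locally 0 (fun t => forall i, 0 <= x i + t * d i <= 1).
Proof.
move=> x01 d_supp; apply: locally_forall_finType => i.
case: (d_supp i) => [-> | xi01].
  by apply: filter_forall => t; rewrite Rmult_0_r Rplus_0_r.
have line_cont : continuous (fun t => x i + t * d i) 0.
  by apply: ex_derive_continuous; auto_derive.
have : locally 0 (fun t => 0 < x i + t * d i < 1).
  apply: (line_cont (fun z => 0 < z < 1)).
  by rewrite Rmult_0_l Rplus_0_r; apply: locally_unit_interval.
by apply: filter_imp => t; lra.
Qed.

Lemma is_derive_local_max (f : R -> R) x l :
  is_derive f x l -> locally x (fun t => f t <= f x) -> l = 0.
Proof.
move=> /is_derive_Reals f'x [eps f_le]; have eps_gt0 := cond_pos eps.
apply: (deriv_maximum f (x - eps) (x + eps) x (exist _ l f'x)); try lra.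
move=> t t_gt t_lt; apply: f_le.
by rewrite /ball /= /AbsRing_ball /abs /minus /plus /opp /=; apply: Rabs_def1; lra.
Qed.

Lemma is_derive_big_sum (I : Type) (r : seq I) (f : I -> R -> R) (f' : I -> R) x :
  (forall i, is_derive (f i) x (f' i)) ->
  is_derive (fun t => \big[Rplus/0]_(i <- r) f i t) x (\big[Rplus/0]_(i <- r) f' i).
Proof.
move=> f_der; elim: r => [|i r IH].
  rewrite big_nil; apply: (is_derive_ext (fun _ => 0)); last exact: is_derive_const.
  by move=> t; rewrite big_nil.
rewrite big_cons; apply: (is_derive_ext (fun t => f i t + \big[Rplus/0]_(j <- r) f j t)).
  by move=> t; rewrite big_cons.
exact: is_derive_plus.
Qed.

Definition binary_entropy (y : R) : R := - (xlnx y + xlnx (1 - y)).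

Lemma is_derive_binary_entropy x :
  0 < x < 1 -> is_derive binary_entropy x (ln (1 - x) - ln x).
Proof.
move=> x01; apply: (is_derive_ext_loc (fun y => - (y * ln y + (1 - y) * ln (1 - y)))).
  apply: filter_imp (locally_unit_interval x01) => y y01.
  by rewrite /binary_entropy !xlnxE //; lra.
auto_derive; first lra.
have -> : 1 + - x = 1 - x by ring.
by field; lra.
Qed.

Lemma is_derive_binary_entropy_line x d : d = 0 \/ 0 < x < 1 ->
  is_derive (fun t => binary_entropy (x + t * d)) 0 (d * (ln (1 - x) - ln x)).
Proof.
case=> [->|x01].
  rewrite Rmult_0_l; apply: (is_derive_ext (fun _ => binary_entropy x)).
    by move=> t; rewrite Rmult_0_r Rplus_0_r.
  exact: is_derive_const.
have line_der : is_derive (fun t => x + t * d) 0 d by auto_derive; [|ring].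
have H_der : is_derive binary_entropy (x + 0 * d) (ln (1 - x) - ln x).
  by rewrite Rmult_0_l Rplus_0_r; apply: is_derive_binary_entropy.
exact: is_derive_comp H_der line_der.
Qed.

Section ProductDistributions.
Variables n m : nat.
Notation entry := (entry n m).
Notation bmat := (bmat n m).
Notation distr := (distr n m).

Definition prod_bern (y : entry -> R) : distr :=
  fun D => \big[Rmult/1]_e (if D e then y e else 1 - y e).

Lemma sum_prod_bern y : \big[Rplus/0]_(D : bmat) prod_bern y D = 1.
Proof.
rewrite /prod_bern -(bigA_distr_bigA (fun e (b : bool) => if b then y e else 1 - y e)).
by apply: big1 => e _; rewrite big_bool /=; ring.
Qed.

Lemma is_distr_prod_bern y : (forall e, 0 <= y e <= 1) -> is_distr (prod_bern y).
Proof.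
move=> y01; split; last exact: sum_prod_bern.
by move=> D; apply: prodR_ge0 => e _; case: (D e); have := y01 e; lra.
Qed.

Lemma marg_prod_bern y e : marg (prod_bern y) e true = y e.
Proof.
pose Q e' (b : bool) := (e' != e) || b.
transitivity (\big[Rmult/1]_e' \big[Rplus/0]_(b | Q e' b) (if b then y e' else 1 - y e')).
  rewrite bigA_distr_big_dep /marg; apply: eq_bigl => D.
  apply/eqP/familyP => [De e' | /(_ e)]; last by rewrite /Q /= eqxx.
  by rewrite unfold_in /Q; case: eqP => // ->; rewrite De.
rewrite (bigD1 e) //= [X in _ * X]big1 => [|e' ne'e].
  by rewrite big_mkcond big_bool /Q eqxx /=; ring.
by rewrite big_mkcond big_bool /Q ne'e /=; ring.
Qed.

Lemma marg_false (q : distr) e : is_distr q -> marg q e false = 1 - marg q e true.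
Proof.
move=> [_ q1]; suff : marg q e true + marg q e false = 1 by lra.
rewrite -q1 (bigID (fun D : bmat => D e)) /=.
by congr (_ + _); apply: eq_bigl => D; case: (D e).
Qed.

Lemma marg_ge_mass (q : distr) D e : is_distr q -> q D <= marg q e (D e).
Proof.
move=> [q_ge0 _]; rewrite /marg (bigD1 D) //=.
rewrite -{1}[q D]Rplus_0_r; apply: Rplus_le_compat_l.
by apply: sumR_ge0.
Qed.

Lemma marg_ge0 (q : distr) e v : is_distr q -> 0 <= marg q e v.
Proof. by move=> [q_ge0 _]; apply: sumR_ge0. Qed.

Lemma marg_true_bounds (q : distr) e : is_distr q -> 0 <= marg q e true <= 1.
Proof.
move=> hq; have := marg_false e hq.
have := marg_ge0 e true hq; have := marg_ge0 e false hq; lra.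
Qed.

Lemma prod_bern_marg (q : distr) D : is_distr q ->
  prod_bern (fun e => marg q e true) D = \big[Rmult/1]_e marg q e (D e).
Proof. by move=> hq; apply: eq_bigr => e _; case: (D e); rewrite ?marg_false. Qed.

Lemma prod_bern_marg_gt0 (q : distr) D : is_distr q -> 0 < q D ->
  0 < prod_bern (fun e => marg q e true) D.
Proof.
move=> hq qD_gt0; rewrite prod_bern_marg //; apply: prodR_gt0 => e _.
by have := marg_ge_mass D e hq; lra.
Qed.

Lemma fr_marg (q : distr) T :
  fr T q = / INR #|area T| * \big[Rplus/0]_(e in area T) marg q e true.
Proof.
rewrite /fr /fr_mat big_distrr /=.
transitivity (\big[Rplus/0]_(e in area T) \big[Rplus/0]_(D : bmat)
                (/ INR #|area T| * (q D * (if D e then 1 else 0)))).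
  rewrite exchange_big /=; apply: eq_bigr => D _.
  by rewrite !big_distrr /=; apply: eq_bigr => e _; ring.
apply: eq_bigr => e _; rewrite -big_distrr /= /marg [in RHS]big_mkcond /=.
by congr (_ * _); apply: eq_bigr => D _; case: (D e) => /=; ring.
Qed.

Lemma cross_entropy_prod_bern (q : distr) : is_distr q ->
  \big[Rplus/0]_(D : bmat) (q D * ln (prod_bern (fun e => marg q e true) D)) =
  - \big[Rplus/0]_e binary_entropy (marg q e true).
Proof.
move=> hq.
transitivity (\big[Rplus/0]_e \big[Rplus/0]_(D : bmat) (q D * ln (marg q e (D e)))).
  rewrite exchange_big; apply: eq_bigr => D _; rewrite prod_bern_marg // -big_distrr /=.
  have [->|qD_gt0] : q D = 0 \/ 0 < q D by have := proj1 hq D; lra.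
    by rewrite !Rmult_0_l.
  by rewrite ln_prod // => e; have := marg_ge_mass D e hq; lra.
rewrite -sumRN; apply: eq_bigr => e _.
rewrite (partition_big (fun D : bmat => D e) predT) //= big_bool /=.
rewrite /binary_entropy Ropp_involutive -(marg_false e hq) !xlnxE; try exact: marg_ge0.
by congr (_ + _); rewrite /marg big_distrl; apply: eq_big => D // /eqP ->.
Qed.

Lemma entropy_prod_bern y : (forall e, 0 <= y e <= 1) ->
  entropy (prod_bern y) = \big[Rplus/0]_e binary_entropy (y e).
Proof.
move=> y01; have hq := is_distr_prod_bern y01.
transitivity (- \big[Rplus/0]_D
    (prod_bern y D * ln (prod_bern (fun e => marg (prod_bern y) e true) D))).
  congr (- _); apply: eq_bigr => D _; rewrite xlnxE; last exact: (proj1 hq).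
  by congr (_ * ln _); apply: eq_bigr => e _; rewrite marg_prod_bern.
rewrite cross_entropy_prod_bern // Ropp_involutive.
by apply: eq_bigr => e _; rewrite marg_prod_bern.
Qed.

End ProductDistributions.

Lemma inP_prod_bern_marg n m (TT : {set tile n m}) alpha (q : distr n m) :
  inP TT alpha q -> inP TT alpha (prod_bern (fun e => marg q e true)).
Proof.
move=> [hq fr_q]; split; first by apply: is_distr_prod_bern => e; apply: marg_true_bounds.
move=> T /fr_q <-; rewrite !fr_marg; congr (_ * _).
by apply: eq_bigr => e _; rewrite marg_prod_bern.
Qed.

Section MaximumEntropy.
Variables (n m : nat) (TT : {set tile n m}) (alpha : tile n m -> R) (p : distr n m).
Hypothesis maxent_p : is_maxent TT alpha p.

Lemma maxent_prod_bern D : p D = prod_bern (fun e => marg p e true) D.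
Proof.
have [[hp _] p_max] := maxent_p.
have marg_bounds e := marg_true_bounds e hp.
have hr := is_distr_prod_bern marg_bounds.
have [gibbs_le gibbs_eq] := gibbs_inequality (proj1 hp) (proj1 hr)
  (fun D => prod_bern_marg_gt0 hp) (proj2 hp) (proj2 hr).
apply: gibbs_eq; apply: Rle_antisym => //.
(* Restated with the binder types of [entropy], so that [lra] sees equal sums. *)
suff ent_le : \big[Rplus/0]_(D : bmat n m) xlnx (p D) <=
    \big[Rplus/0]_(D : bmat n m) (p D * ln (prod_bern (fun e => marg p e true) D)).
  exact: ent_le.
have := p_max _ (inP_prod_bern_marg (proj1 maxent_p)).
rewrite entropy_prod_bern // /entropy.
have := cross_entropy_prod_bern hp; lra.
Qed.

Lemma maxent_stationary (d : entry n m -> R) :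
  (forall e, d e = 0 \/ 0 < marg p e true < 1) ->
  (forall T, T \in TT -> \big[Rplus/0]_(e in area T) d e = 0) ->
  \big[Rplus/0]_e (d e * (ln (1 - marg p e true) - ln (marg p e true))) = 0.
Proof.
move=> d_supp d_ker; have [[hp fr_p] p_max] := maxent_p.
pose y t e := marg p e true + t * d e.
pose phi t := \big[Rplus/0]_e binary_entropy (y t e).
have y_near : locally 0 (fun t => forall e, 0 <= y t e <= 1).
  by apply: locally_line_in_unit => // e; apply: marg_true_bounds.
have y_feasible t : (forall e, 0 <= y t e <= 1) -> inP TT alpha (prod_bern (y t)).
  move=> y01; split; first exact: is_distr_prod_bern.
  move=> T T_in; rewrite -(fr_p T T_in) !fr_marg; congr (_ * _).
  under eq_bigr => e _ do rewrite marg_prod_bern /y.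
  by rewrite big_split /= -big_distrr /= d_ker // Rmult_0_r Rplus_0_r.
have y0_bounds e : 0 <= y 0 e <= 1.
  by rewrite /y Rmult_0_l Rplus_0_r; apply: marg_true_bounds.
have entropy_p : entropy p = phi 0.
  rewrite /phi -(entropy_prod_bern y0_bounds) /entropy; congr (- _).
  apply: eq_bigr => D _; rewrite maxent_prod_bern.
  by congr xlnx; apply: eq_bigr => e _; rewrite /y Rmult_0_l Rplus_0_r.
apply: (@is_derive_local_max phi 0).
  by apply: is_derive_big_sum => e; apply: is_derive_binary_entropy_line.
apply: filter_imp y_near => t y01.
by rewrite -entropy_p /phi -(entropy_prod_bern y01); apply: p_max; apply: y_feasible.
Qed.

Lemma maxent_logit_lincomb :
  exists c : tile n m -> R, forall e, 0 < marg p e true < 1 ->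
    ln (1 - marg p e true) - ln (marg p e true) =
    \big[Rplus/0]_(T in TT | e \in area T) c T.
Proof.
pose x e := marg p e true.
pose interior e := Rltb 0 (x e) && Rltb (x e) 1.
have interiorP e : reflect (0 < x e < 1) (interior e).
  by apply: (iffP andP) => [[/RltbP ? /RltbP ?] | [? ?]]; split=> //; apply/RltbP.
pose a T e : R := if [&& T \in TT, e \in area T & interior e] then 1 else 0.
pose g e := if interior e then ln (1 - x e) - ln (x e) else 0.
have [c g_comb] : exists c, forall e, g e = \big[Rplus/0]_T (c T * a T e).
  apply: lincomb_of_kernel_orthogonal => d d_ker.
  pose d' e := if interior e then d e else 0.
  transitivity (\big[Rplus/0]_e (d' e * (ln (1 - x e) - ln (x e)))).
    by apply: eq_bigr => e _; rewrite /g /d'; case: (interior e); ring.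
  apply: maxent_stationary => [e | T T_in].
    by rewrite /d'; case: interiorP; [right | left].
  apply: etrans _ (d_ker T); rewrite big_mkcond; apply: eq_bigr => e _.
  by rewrite /a /d' T_in; case: (e \in area T); case: (interior e) => /=; ring.
exists c => e /interiorP e_in.
move: (g_comb e); rewrite /g e_in => ->.
rewrite [in RHS]big_mkcond /=; apply: eq_bigr => T _.
by rewrite /a e_in andbT; case: (_ && _); ring.
Qed.

End MaximumEntropy.

Theorem theorem2 (n m : nat) (hn : (1 <= n)%nat) (hm : (1 <= m)%nat)
  (TT : {set tile n m}) (alpha : tile n m -> R)
  (Hnonempty : forall T, T \in TT -> T.1 != set0 /\ T.2 != set0)
  (Halpha : forall T, T \in TT -> 0 <= alpha T <= 1)
  (Hcons : exists q, inP TT alpha q)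
  (p : distr n m) (Hp : is_maxent TT alpha p) :
  (forall D : bmat n m,
      p D = \big[Rmult/1]_(e : entry n m) marg p e (D e)) /\
  exists lam : tile n m -> R,
    forall e : entry n m,
      marg p e true = 0 \/ marg p e true = 1 \/
      marg p e true =
        exp (\big[Rplus/0]_(T in TT | e \in area T) lam T) /
        (exp (\big[Rplus/0]_(T in TT | e \in area T) lam T) + 1).
Proof.
have hp := proj1 (proj1 Hp).
split=> [D|]; first by rewrite (maxent_prod_bern Hp) prod_bern_marg.
have [c logit_comb] := maxent_logit_lincomb Hp.
exists (fun T => - c T) => e.
have x_bounds := marg_true_bounds e hp.
have [x_eq0 | [x_eq1 | x01]] :
  marg p e true = 0 \/ marg p e true = 1 \/ 0 < marg p e true < 1 by lra.
- by left.
- by right; left.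
right; right; rewrite sumRN; exact: logit_inv x01 (logit_comb e x01).
Qed.
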